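(* Let $0<\epsilon<1$ and assume $E\setminus T\neq\emptyset$. Run the SimpleSolver process for $K=\left\lceil \tau \ln\!\big(\mathrm{st}(T)\,\tau/\epsilon\big)\right\rceil$ cycle updates, obtaining $f_K$ and its tree induced voltages $v_K$. Then \[ \mathbb{E}\big[\xi_r(f_K)\big]\le (1+\epsilon)\,\xi_r(f^* )\qquad\text{and}\qquad \mathbb{E}\,\big\|v_K-L^\dagger\chi\big\|_L\le \sqrt{\epsilon}\,\big\|L^\dagger\chi\big\|_L . \]
   Context: Let $G=(V,E,w)$ be a connected undirected graph with $n=|V|$, $m=|E|$, edge weights $w_e>0$ and resistances $r_e=1/w_e$. Each edge has a fixed orientation $(a,b)$; for $f\in\mathbb{R}^E$ write $f(b,a):=-f(a,b)$. The incidence matrix $B\in\mathbb{R}^{E\times V}$ has $B_{(a,b),c}=1$ if $c=a$, $-1$ if $c=b$, $0$ otherwise; $R=\mathrm{diag}(r_e)_{e\in E}$; the Laplacian is $L=B^TR^{-1}B$ and $L^\dagger$ is its Moore–Penrose pseudoinverse; $\|x\|_M=\sqrt{x^TMx}$. The energy of $f\in\mathbb{R}^E$ is $\xi_r(f)=f^TRf$. Fix $\chi\in\mathbb{R}^V$ with $\sum_a\chi(a)=0$; $f$ is feasible if $B^Tf=\chi$; $f^*$ is the unique feasible $f$ minimizing $\xi_r(f)$. Let $T\subseteq E$ be a spanning tree. For vertices $a,b$, $\pi_{(a,b)}\in\mathbb{R}^E$ is the unit flow from $a$ to $b$ along the unique $a$–$b$ path in $T$, and $P_{(a,b)}$ is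 the set of edges of that path. For $e=(a,b)\in E\setminus T$, the tree cycle vector is $c_e=\mathbf{1}_e-\pi_{(a,b)}$, $R_e=c_e^TRc_e$, and $\Delta_e(f)=f^TRc_e$. The tree condition number is $\tau=\sum_{e\in E\setminus T}R_e/r_e$. The stretch of $e=(a,b)\in E$ is $\mathrm{st}(e)=\frac{1}{r_e}\sum_{e'\in P_{(a,b)}}r_{e'}$ and $\mathrm{st}(T)=\sum_{e\in E}\mathrm{st}(e)$. Fix a root $s\in V$; the tree induced voltages of $f$ are $v(a)=\sum r_{e'}f(e')$, summing over the edges $e'$ of the tree path from $a$ to $s$, each traversed in the direction of the path (with the antisymmetry convention). Let $p$ be the probability distribution on $E\setminus T$ with $p_e=\frac{R_e}{r_e\tau}$. The SimpleSolver process: $f_0$ is the unique feasible flow supported on $T$; for $i\ge1$, $e_i$ is drawn from $p$ independently of everything else and $f_i=f_{i-1}-\frac{\Delta_{e_i}(f_{i-1})}{R_{e_i}}c_{e_i}$; $v_i$ denotes the tree induced voltages of $f_i$. *)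

From Stdlib Require Import Reals List Lia.
Open Scope R_scope.

(* A weighted graph: vertices 0..nV-1, edges 0..nE-1; edge e is oriented
   (ea e, eb e) and has weight wt e. *)
Record graph := mkGraph { nV : nat; nE : nat; ea : nat -> nat; eb : nat -> nat; wt : nat -> R }.

Definition rsum (k : nat) (g : nat -> R) : R := fold_right Rplus 0 (map g (seq 0 k)).

Definition well_formed (G : graph) : Prop :=
  (forall e, (e < nE G)%nat ->
     (ea G e < nV G)%nat /\ (eb G e < nV G)%nat /\ ea G e <> eb G e /\ 0 < wt G e) /\
  (forall e e', (e < nE G)%nat -> (e' < nE G)%nat -> e <> e' ->
     ~ ((ea G e = ea G e' /\ eb G e = eb G e') \/ (ea G e = eb G e' /\ eb G e = ea G e'))).

Definition res (G : graph) (e : nat) : R := / wt G e.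

(* a step (e, d) traverses edge e, forward (ea -> eb) iff d = true *)
Definition src (G : graph) (st : nat * bool) : nat := if snd st then ea G (fst st) else eb G (fst st).
Definition dst (G : graph) (st : nat * bool) : nat := if snd st then eb G (fst st) else ea G (fst st).

Fixpoint walk (G : graph) (T : nat -> bool) (a b : nat) (p : list (nat * bool)) : Prop :=
  match p with
  | nil => a = b
  | st :: q => (fst st < nE G)%nat /\ T (fst st) = true /\ src G st = a /\ walk G T (dst G st) b q
  end.

Definition tree_path (G : graph) (T : nat -> bool) (a b : nat) (p : list (nat * bool)) : Prop :=
  walk G T a b p /\ NoDup (a :: map (dst G) p).

Definition acyclic (G : graph) (T : nat -> bool) : Prop :=
  ~ (exists a p, p <> nil /\ walk G T a a p /\ NoDup (map fst p)).

Definition spanning_tree (G : graph) (T : nat -> bool) : Prop :=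
  (forall e, T e = true -> (e < nE G)%nat) /\
  (forall a b, (a < nV G)%nat -> (b < nV G)%nat -> exists p, walk G T a b p) /\
  acyclic G T.

Definition Bmat (G : graph) (e c : nat) : R :=
  if Nat.eqb c (ea G e) then 1 else if Nat.eqb c (eb G e) then -1 else 0.

Definition Lap (G : graph) (u v : nat) : R :=
  rsum (nE G) (fun e => Bmat G e u * / res G e * Bmat G e v).

Definition feasible (G : graph) (chi : nat -> R) (f : nat -> R) : Prop :=
  forall c, (c < nV G)%nat -> rsum (nE G) (fun e => Bmat G e c * f e) = chi c.

Definition energy (G : graph) (f : nat -> R) : R :=
  rsum (nE G) (fun e => f e * res G e * f e).

Definition supported_on (G : graph) (T : nat -> bool) (f : nat -> R) : Prop :=
  forall e, (e < nE G)%nat -> T e = false -> f e = 0.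

Definition path_flow (p : list (nat * bool)) (e : nat) : R :=
  fold_right Rplus 0 (map (fun st : nat * bool => if Nat.eqb (fst st) e then (if snd st then 1 else -1) else 0) p).

Definition path_res (G : graph) (p : list (nat * bool)) : R :=
  fold_right Rplus 0 (map (fun st : nat * bool => res G (fst st)) p).

(* pth a b : the tree path from a to b *)
Section TreeQuantities.
Variables (G : graph) (T : nat -> bool) (pth : nat -> nat -> list (nat * bool)).

Definition cyc (e j : nat) : R :=
  (if Nat.eqb j e then 1 else 0) - path_flow (pth (ea G e) (eb G e)) j.

Definition Rcyc (e : nat) : R := rsum (nE G) (fun j => cyc e j * res G j * cyc e j).

Definition Delta (e : nat) (f : nat -> R) : R := rsum (nE G) (fun j => f j * res G j * cyc e j).

Definition tau : R := rsum (nE G) (fun e => if T e then 0 else Rcyc e / res G e).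

Definition stretch (e : nat) : R := / res G e * path_res G (pth (ea G e) (eb G e)).

Definition stT : R := rsum (nE G) stretch.

Definition prob (e : nat) : R := Rcyc e / (res G e * tau).

Definition update (e : nat) (f : nat -> R) : nat -> R :=
  fun j => f j - Delta e f / Rcyc e * cyc e j.

(* expectation of g(f_K) where f_0 = f and f_i = update e_i f_{i-1},
   e_i i.i.d. with law prob on E \ T *)
Fixpoint expect (K : nat) (g : (nat -> R) -> R) (f : nat -> R) : R :=
  match K with
  | O => g f
  | S k => rsum (nE G) (fun e => if T e then 0 else prob e * expect k g (update e f))
  end.

Definition volt (s : nat) (f : nat -> R) (a : nat) : R :=
  fold_right Rplus 0
    (map (fun st : nat * bool => (if snd st then 1 else -1) * res G (fst st) * f (fst st)) (pth a s)).

End TreeQuantities.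

Definition matmul (n : nat) (A B : nat -> nat -> R) (i j : nat) : R :=
  rsum n (fun k => A i k * B k j).
Definition matvec (n : nat) (X : nat -> nat -> R) (x : nat -> R) (i : nat) : R :=
  rsum n (fun k => X i k * x k).

Definition is_pinv (n : nat) (A X : nat -> nat -> R) : Prop :=
  forall i j, (i < n)%nat -> (j < n)%nat ->
    matmul n A (matmul n X A) i j = A i j /\
    matmul n X (matmul n A X) i j = X i j /\
    matmul n A X i j = matmul n A X j i /\
    matmul n X A i j = matmul n X A j i.

Definition Lnorm (G : graph) (x : nat -> R) : R :=
  sqrt (rsum (nV G) (fun u => rsum (nV G) (fun v => x u * Lap G u v * x v))).

(* ceiling: ceil x = - floor (- x), floor y = up y - 1 *)
Definition ceilR (x : R) : Z := (- (up (- x) - 1))%Z.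

From Pilot Require Import Defs.
From Stdlib Require Import Reals List Lia Lra Psatz Classical ZArith.
Open Scope R_scope.

(** Write [<x, y>_R = x^T R y].  The argument has four ingredients.
    - Tree flows: a circulation supported on the spanning tree [T] vanishes
      ([forest_circulation_zero]); hence tree paths compose, each tree cycle
      [c_e] is a circulation, and for feasible [f] the decomposition
      [f - fstar = sum_(e notin T) (f_e - fstar_e) c_e] holds.
    - Optimality: [<fstar, c_e>_R = 0], so the energy gap is
      [gap f = ||f - fstar||_R^2] and [Delta_e(f) = <f - fstar, c_e>_R].  With
      [S(f) = sum_(e notin T) Delta_e(f)^2 / r_e], Cauchy–Schwarz gives
      [S(f) <= tau gap f], and the tree induced voltages [v] of [f] satisfy
      [||v - L^dagger chi||_L^2 = S(f) - gap f >= 0].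
    - One random update lowers the expected gap by [S(f)/tau >= gap f / tau];
      by induction the expected gap after [K] steps is at most
      [(1 - 1/tau)^K gap f_0], and (Jensen) the expected voltage error is at
      most [sqrt (tau (1 - 1/tau)^K gap f_0)].
    - The tree flow satisfies [xi(f_0) <= st(T) xi(fstar)], and the choice of [K]
      gives [(1 - 1/tau)^K <= eps / (st(T) tau)]; the theorem follows. *)

(** Finite sums.  [rsum k g] sums over the list [seq 0 k]; it is convenient
    to prove the algebra of sums for an arbitrary index list first. *)

Definition lsum {A} (l : list A) (f : A -> R) : R := fold_right Rplus 0 (map f l).

Lemma lsum_cons {A} (x : A) l f : lsum (x :: l) f = f x + lsum l f.
Proof. reflexivity. Qed.

Lemma lsum_ext {A} (l : list A) f g : (forall x, In x l -> f x = g x) -> lsum l f = lsum l g.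
Proof.
  induction l as [|y l IH]; intros H; [reflexivity|]. rewrite !lsum_cons, H by (left; auto).
  rewrite IH; [reflexivity|]. intros x Hx. apply H. right; auto.
Qed.

Lemma lsum_plus {A} (l : list A) f g : lsum l (fun x => f x + g x) = lsum l f + lsum l g.
Proof. induction l; [unfold lsum; simpl; lra|]. rewrite !lsum_cons, IHl. lra. Qed.

Lemma lsum_minus {A} (l : list A) f g : lsum l (fun x => f x - g x) = lsum l f - lsum l g.
Proof. induction l; [unfold lsum; simpl; lra|]. rewrite !lsum_cons, IHl. lra. Qed.

Lemma lsum_scal {A} (l : list A) c f : lsum l (fun x => c * f x) = c * lsum l f.
Proof. induction l; [unfold lsum; simpl; lra|]. rewrite !lsum_cons, IHl. lra. Qed.

Lemma lsum_zero {A} (l : list A) : lsum l (fun _ => 0) = 0.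
Proof. induction l; [reflexivity|]. rewrite lsum_cons, IHl. lra. Qed.

Lemma lsum_le {A} (l : list A) f g : (forall x, In x l -> f x <= g x) -> lsum l f <= lsum l g.
Proof.
  induction l as [|y l IH]; intros H; [unfold lsum; simpl; lra|]. rewrite !lsum_cons.
  apply Rplus_le_compat; [apply H; left; auto | apply IH; intros; apply H; right; auto].
Qed.

Lemma lsum_nonneg {A} (l : list A) f : (forall x, In x l -> 0 <= f x) -> 0 <= lsum l f.
Proof. intros H. rewrite <- (lsum_zero l). apply lsum_le. auto. Qed.

Lemma lsum_swap {A B} (l1 : list A) (l2 : list B) f :
  lsum l1 (fun x => lsum l2 (fun y => f x y)) = lsum l2 (fun y => lsum l1 (fun x => f x y)).
Proof.
  induction l1 as [|x l1 IH].
  - unfold lsum at 1. simpl. symmetry. rewrite <- (lsum_zero l2). apply lsum_ext. reflexivity.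
  - rewrite lsum_cons, IH, <- lsum_plus. reflexivity.
Qed.

Lemma lsum_single_le {A} (l : list A) f k :
  (forall x, In x l -> 0 <= f x) -> In k l -> f k <= lsum l f.
Proof.
  induction l as [|y l IH]; intros H Hk; [destruct Hk|]. rewrite lsum_cons.
  assert (0 <= f y) by (apply H; left; auto).
  assert (0 <= lsum l f) by (apply lsum_nonneg; intros; apply H; right; auto).
  destruct Hk as [<-|Hk]; [lra|].
  assert (f k <= lsum l f) by (apply IH; auto; intros; apply H; right; auto). lra.
Qed.

Lemma lsum_delta (l : list nat) k h : NoDup l -> In k l ->
  lsum l (fun i => if Nat.eqb i k then h i else 0) = h k.
Proof.
  induction l as [|y l IH]; intros Hn Hk; [destruct Hk|]. inversion Hn; subst.
  rewrite lsum_cons. destruct Hk as [<-|Hk].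
  - rewrite Nat.eqb_refl, (lsum_ext l _ (fun _ => 0)), lsum_zero; [lra|].
    intros x Hx. destruct (Nat.eqb_spec x y); [subst; contradiction|reflexivity].
  - rewrite IH by auto. destruct (Nat.eqb_spec y k); [subst; contradiction|lra].
Qed.

Lemma in_seq0 k i : In i (seq 0 k) <-> (i < k)%nat.
Proof. rewrite in_seq. lia. Qed.

Lemma rsum_ext k f g : (forall i, (i < k)%nat -> f i = g i) -> rsum k f = rsum k g.
Proof. intros H. apply lsum_ext. intros x Hx. apply H, in_seq0; auto. Qed.

Lemma rsum_plus k f g : rsum k (fun x => f x + g x) = rsum k f + rsum k g.
Proof. apply lsum_plus. Qed.

Lemma rsum_minus k f g : rsum k (fun x => f x - g x) = rsum k f - rsum k g.
Proof. apply lsum_minus. Qed.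

Lemma rsum_scal k c f : rsum k (fun x => c * f x) = c * rsum k f.
Proof. apply lsum_scal. Qed.

Lemma rsum_scalr k c f : rsum k (fun x => f x * c) = rsum k f * c.
Proof. rewrite <- (Rmult_comm c), <- rsum_scal. apply rsum_ext. intros; ring. Qed.

Lemma rsum_zero k : rsum k (fun _ => 0) = 0.
Proof. apply lsum_zero. Qed.

Lemma rsum_zero_ext k f : (forall i, (i < k)%nat -> f i = 0) -> rsum k f = 0.
Proof. intros H. rewrite <- (rsum_zero k). apply rsum_ext. auto. Qed.

Lemma rsum_le k f g : (forall i, (i < k)%nat -> f i <= g i) -> rsum k f <= rsum k g.
Proof. intros H. apply lsum_le. intros x Hx. apply H, in_seq0; auto. Qed.

Lemma rsum_nonneg k f : (forall i, (i < k)%nat -> 0 <= f i) -> 0 <= rsum k f.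
Proof. intros H. apply lsum_nonneg. intros x Hx. apply H, in_seq0; auto. Qed.

Lemma rsum_swap n m f :
  rsum n (fun i => rsum m (fun j => f i j)) = rsum m (fun j => rsum n (fun i => f i j)).
Proof. apply lsum_swap. Qed.

Lemma rsum_delta k j h : (j < k)%nat -> rsum k (fun i => if Nat.eqb i j then h i else 0) = h j.
Proof. intros. apply lsum_delta; [apply seq_NoDup | apply in_seq0; auto]. Qed.

Lemma rsum_single_le k f j : (forall i, (i < k)%nat -> 0 <= f i) -> (j < k)%nat -> f j <= rsum k f.
Proof.
  intros H Hj. apply lsum_single_le; [|apply in_seq0; auto]. intros x Hx. apply H, in_seq0; auto.
Qed.

Lemma rsum_zero_nonneg k f : (forall i, (i < k)%nat -> 0 <= f i) -> rsum k f = 0 ->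
  forall i, (i < k)%nat -> f i = 0.
Proof.
  intros H Hs i Hi. pose proof (rsum_single_le k f i H Hi). pose proof (H i Hi). lra.
Qed.

Lemma rsum_nonzero k f j : (j < k)%nat -> rsum k f = 0 -> f j <> 0 ->
  exists j', (j' < k)%nat /\ j' <> j /\ f j' <> 0.
Proof.
  intros Hj Hs Hf. apply NNPP. intros Hno. apply Hf. rewrite <- Hs, <- (rsum_delta k j f) by auto.
  apply rsum_ext. intros i Hi. destruct (Nat.eqb_spec i j) as [->|Hne]; [reflexivity|].
  apply NNPP. intros Hz. apply Hno. exists i. auto.
Qed.

Lemma discriminant_le A B C :
  0 <= A -> (forall t, 0 <= A * t * t - 2 * C * t + B) -> C * C <= A * B.
Proof.
  intros HA H. destruct (Rle_lt_or_eq_dec 0 A HA) as [Hp|<-].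
  - specialize (H (C / A)).
    replace (A * (C / A) * (C / A) - 2 * C * (C / A) + B) with (B - C * C / A) in H by (field; lra).
    assert (A * (C * C / A) <= A * B) by (apply Rmult_le_compat_l; lra).
    replace (A * (C * C / A)) with (C * C) in H0 by (field; lra). lra.
  - destruct (Req_dec C 0) as [->|Hc]; [lra|].
    specialize (H ((B + 1) / (2 * C))).
    replace (0 * ((B + 1) / (2 * C)) * ((B + 1) / (2 * C)) - 2 * C * ((B + 1) / (2 * C)) + B)
      with (-1) in H by (field; auto). lra.
Qed.

Lemma weighted_cauchy_schwarz n (w a b : nat -> R) : (forall i, (i < n)%nat -> 0 < w i) ->
  rsum n (fun i => a i * b i) * rsum n (fun i => a i * b i)
  <= rsum n (fun i => w i * a i * a i) * rsum n (fun i => b i * b i / w i).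
Proof.
  intros Hw. apply discriminant_le.
  - apply rsum_nonneg. intros i Hi. specialize (Hw i Hi). nra.
  - intros t.
    replace (rsum n (fun i => w i * a i * a i) * t * t - 2 * rsum n (fun i => a i * b i) * t
             + rsum n (fun i => b i * b i / w i))
      with (rsum n (fun i => w i * ((a i * t - b i / w i) * (a i * t - b i / w i)))).
    + apply rsum_nonneg. intros i Hi. specialize (Hw i Hi).
      apply Rmult_le_pos; [lra | apply Rle_0_sqr].
    + rewrite <- !rsum_scalr, <- rsum_scal, <- rsum_scalr, <- rsum_minus, <- rsum_plus.
      apply rsum_ext. intros i Hi. specialize (Hw i Hi). field. lra.
Qed.

Lemma sqrt_jensen m (w x : nat -> R) : (forall e, (e < m)%nat -> 0 <= w e) -> rsum m w = 1 ->
  (forall e, (e < m)%nat -> 0 <= x e) ->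
  rsum m (fun e => w e * sqrt (x e)) <= sqrt (rsum m (fun e => w e * x e)).
Proof.
  intros Hw Hsw Hx. set (M := rsum m (fun e => w e * sqrt (x e))).
  assert (HM : 0 <= M).
  { apply rsum_nonneg. intros e He. apply Rmult_le_pos; auto. apply sqrt_pos. }
  assert (Hsq : M * M <= rsum m w * rsum m (fun e => w e * x e)).
  { apply discriminant_le; [apply rsum_nonneg; auto|]. intros t.
    replace (rsum m w * t * t - 2 * M * t + rsum m (fun e => w e * x e))
      with (rsum m (fun e => w e * ((t - sqrt (x e)) * (t - sqrt (x e))))).
    - apply rsum_nonneg. intros e He. apply Rmult_le_pos; [auto | apply Rle_0_sqr].
    - unfold M. rewrite <- !rsum_scalr, <- rsum_scal, <- rsum_scalr, <- rsum_minus, <- rsum_plus.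
      apply rsum_ext. intros e He. pose proof (sqrt_sqrt (x e) (Hx e He)). nra. }
  rewrite Hsw, Rmult_1_l in Hsq. rewrite <- (sqrt_square M) by auto. apply sqrt_le_1_alt. auto.
Qed.

Definition divergence (G : graph) (x : nat -> R) (c : nat) : R :=
  rsum (nE G) (fun e => Bmat G e c * x e).

Definition is_circulation (G : graph) (x : nat -> R) : Prop :=
  forall c, (c < nV G)%nat -> divergence G x c = 0.

Definition step_sign (st : nat * bool) : R := if snd st then 1 else -1.
Definition vtx_ind (c a : nat) : R := if Nat.eqb c a then 1 else 0.

Section Walks.
Variables (G : graph) (T : nat -> bool).
Hypothesis WF : well_formed G.

Lemma edge_wf e : (e < nE G)%nat ->
  (ea G e < nV G)%nat /\ (eb G e < nV G)%nat /\ ea G e <> eb G e /\ 0 < wt G e.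
Proof. apply (proj1 WF). Qed.

Lemma res_pos e : (e < nE G)%nat -> 0 < res G e.
Proof. intros He. apply Rinv_0_lt_compat, edge_wf; auto. Qed.

Lemma Bmat_indicator e c : (e < nE G)%nat -> Bmat G e c = vtx_ind c (ea G e) - vtx_ind c (eb G e).
Proof.
  intros He. destruct (edge_wf e He) as [_ [_ [Hne _]]]. unfold Bmat, vtx_ind.
  destruct (Nat.eqb_spec c (ea G e)); destruct (Nat.eqb_spec c (eb G e)); subst; try lra.
  congruence.
Qed.

Lemma divergence_lin a b x y c :
  divergence G (fun j => a * x j + b * y j) c = a * divergence G x c + b * divergence G y c.
Proof. unfold divergence. rewrite <- !rsum_scal, <- rsum_plus. apply rsum_ext. intros; lra. Qed.

Lemma divergence_ext x y c : (forall j, (j < nE G)%nat -> x j = y j) ->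
  divergence G x c = divergence G y c.
Proof. intros H. apply rsum_ext. intros j Hj. rewrite H; auto. Qed.

Lemma divergence_unit e c : (e < nE G)%nat ->
  divergence G (fun j => if Nat.eqb j e then 1 else 0) c = Bmat G e c.
Proof.
  intros He. unfold divergence. rewrite <- (rsum_delta (nE G) e (fun j => Bmat G j c)) by auto.
  apply rsum_ext. intros j Hj. destruct (Nat.eqb j e); lra.
Qed.

Lemma step_ends st : (src G st = ea G (fst st) /\ dst G st = eb G (fst st)) \/
                     (src G st = eb G (fst st) /\ dst G st = ea G (fst st)).
Proof. unfold src, dst. destruct (snd st); auto. Qed.

Lemma step_incidence st c : (fst st < nE G)%nat ->
  step_sign st * Bmat G (fst st) c = vtx_ind c (src G st) - vtx_ind c (dst G st).
Proof. intros H. rewrite Bmat_indicator by auto. unfold step_sign, src, dst. destruct (snd st); lra. Qed.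

Lemma walk_edges a b p : walk G T a b p -> forall st, In st p -> (fst st < nE G)%nat /\ T (fst st) = true.
Proof.
  revert a. induction p as [|s0 q IH]; intros a Hw st Hi; [destruct Hi|].
  destruct Hw as [H1 [H2 [_ H4]]]. destruct Hi as [<-|Hi]; eauto.
Qed.

Lemma path_flow_lsum p j :
  path_flow p j = lsum p (fun st => if Nat.eqb (fst st) j then step_sign st else 0).
Proof. reflexivity. Qed.

Lemma path_flow_cons st q j :
  path_flow (st :: q) j = (if Nat.eqb (fst st) j then step_sign st else 0) + path_flow q j.
Proof. reflexivity. Qed.

Lemma path_flow_pairing p h : (forall st, In st p -> (fst st < nE G)%nat) ->
  rsum (nE G) (fun j => path_flow p j * h j) = lsum p (fun st => step_sign st * h (fst st)).
Proof.
  induction p as [|st q IH]; intros Hp.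
  - rewrite (rsum_ext _ _ (fun _ => 0)) by (intros; unfold path_flow; simpl; lra).
    apply rsum_zero.
  - rewrite lsum_cons, <- IH by (intros; apply Hp; right; auto).
    rewrite <- (rsum_delta (nE G) (fst st) (fun j => step_sign st * h j)) by (apply Hp; left; auto).
    rewrite <- rsum_plus. apply rsum_ext. intros i Hi. rewrite path_flow_cons.
    rewrite (Nat.eqb_sym i). destruct (Nat.eqb (fst st) i); lra.
Qed.

Lemma walk_flow_divergence a b p : walk G T a b p -> forall c,
  divergence G (path_flow p) c = vtx_ind c a - vtx_ind c b.
Proof.
  intros Hw c. unfold divergence.
  rewrite (rsum_ext _ _ (fun e => path_flow p e * Bmat G e c)) by (intros; lra).
  rewrite path_flow_pairing by (intros st Hi; eapply walk_edges; eauto).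
  revert a Hw. induction p as [|st q IH]; intros a Hw.
  - simpl in Hw. subst. unfold lsum; simpl. lra.
  - destruct Hw as [H1 [_ [H3 H4]]]. rewrite lsum_cons, (IH _ H4), step_incidence, H3 by auto. lra.
Qed.

Lemma walk_flow_support a b p : walk G T a b p -> supported_on G T (path_flow p).
Proof.
  intros Hw j _ Hj. rewrite path_flow_lsum. transitivity (lsum p (fun _ => 0)); [|apply lsum_zero].
  apply lsum_ext. intros st Hi.
  destruct (walk_edges a b p Hw st Hi) as [_ HT].
  destruct (Nat.eqb_spec (fst st) j); [congruence | auto].
Qed.

Lemma walk_app a b p1 p2 : walk G T a b (p1 ++ p2) <-> exists c, walk G T a c p1 /\ walk G T c b p2.
Proof.
  revert a. induction p1 as [|st q IH]; intros a; simpl.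
  - split; [intros H; exists a; auto | intros [c [-> H]]; auto].
  - split.
    + intros [H1 [H2 [H3 H4]]]. apply IH in H4. destruct H4 as [c [H5 H6]]. exists c. auto.
    + intros [c [[H1 [H2 [H3 H4]]] H5]]. repeat split; auto. apply IH. exists c; auto.
Qed.

Lemma walk_src_visited c b q st : walk G T c b q -> In st q -> In (src G st) (c :: map (dst G) q).
Proof.
  revert c. induction q as [|s0 q IH]; intros c Hw Hi; [destruct Hi|].
  destruct Hw as [_ [_ [H3 H4]]]. destruct Hi as [<-|Hi]; [left; auto | right; apply IH; auto].
Qed.

Lemma simple_walk_distinct_edges c b p : walk G T c b p -> NoDup (c :: map (dst G) p) ->
  NoDup (map fst p).
Proof.
  revert c. induction p as [|st q IH]; intros c Hw Hn; [constructor|].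
  destruct Hw as [_ [_ [H3 H4]]]. simpl in Hn. apply NoDup_cons_iff in Hn. destruct Hn as [Hc Hn'].
  pose proof Hn' as Hn''. apply NoDup_cons_iff in Hn''. destruct Hn'' as [Hd _].
  simpl. constructor; [|eapply IH; eauto].
  intros Hin. apply in_map_iff in Hin. destruct Hin as [st2 [Hf Hi2]].
  assert (Hdi : In (dst G st2) (map (dst G) q)) by (apply in_map; auto).
  destruct (step_ends st) as [[E1 E2]|[E1 E2]]; destruct (step_ends st2) as [[F1 F2]|[F1 F2]];
  rewrite Hf in F1, F2; rewrite <- H3 in Hc;
  first [ rewrite F2, <- E2 in Hdi | rewrite F2, <- E1 in Hdi ];
  first [ apply Hd; exact Hdi | apply Hc; right; exact Hdi ].
Qed.

Lemma path_flow_on_step p st : NoDup (map fst p) -> In st p -> path_flow p (fst st) = step_sign st.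
Proof.
  induction p as [|s0 q IH]; intros Hn Hi; [destruct Hi|]. simpl in Hn.
  inversion Hn as [|? ? Hnot Hq]; subst. rewrite path_flow_cons. destruct Hi as [<-|Hi].
  - rewrite Nat.eqb_refl, path_flow_lsum, (lsum_ext q _ (fun _ => 0)), lsum_zero; [lra|].
    intros x Hx. destruct (Nat.eqb_spec (fst x) (fst s0)) as [E|]; auto.
    exfalso. apply Hnot. rewrite <- E. apply in_map; auto.
  - rewrite IH by auto. destruct (Nat.eqb_spec (fst s0) (fst st)) as [E|]; [|lra].
    exfalso. apply Hnot. rewrite E. apply in_map; auto.
Qed.

Lemma simple_path_flow_energy a b p : walk G T a b p -> NoDup (a :: map (dst G) p) ->
  rsum (nE G) (fun j => path_flow p j * res G j * path_flow p j) = path_res G p.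
Proof.
  intros Hw Hn. pose proof (simple_walk_distinct_edges a b p Hw Hn) as He.
  rewrite (rsum_ext _ _ (fun j => path_flow p j * (res G j * path_flow p j))) by (intros; lra).
  rewrite path_flow_pairing by (intros st Hi; eapply walk_edges; eauto).
  apply lsum_ext. intros st Hi. rewrite path_flow_on_step by auto. unfold step_sign.
  destruct (snd st); lra.
Qed.

End Walks.

(** If [g] were nonzero
    on some edge, then -- since flow conservation at every vertex forces a second
    edge with nonzero flow at each endpoint -- a simple walk of [g]-carrying tree
    edges could be extended indefinitely at its front: either it revisits one of
    its vertices, closing a cycle in [T], or it gains a new vertex, which can
    happen only [nV G] times. *)
Section ForestCirculation.
Variables (G : graph) (T : nat -> bool) (g : nat -> R).
Hypothesis WF : well_formed G.
Hypothesis Hacyc : acyclic G T.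
Hypothesis Hcirc : is_circulation G g.
Hypothesis Hsupp : supported_on G T g.

Definition flow_walk (a b : nat) (p : list (nat * bool)) : Prop :=
  walk G T a b p /\ NoDup (a :: map (dst G) p) /\ exists st q, p = st :: q /\ g (fst st) <> 0.

Lemma step_endpoints_bound st : (fst st < nE G)%nat -> (src G st < nV G)%nat /\ (dst G st < nV G)%nat.
Proof.
  intros H. destruct (edge_wf G WF _ H) as [A1 [A2 _]].
  destruct (step_ends G st) as [[E1 E2]|[E1 E2]]; rewrite E1, E2; auto.
Qed.

Lemma flow_walk_length a b p : flow_walk a b p -> (S (length p) <= nV G)%nat.
Proof.
  intros [Hw [Hn [st [q [-> _]]]]].
  assert (Hincl : incl (a :: map (dst G) (st :: q)) (seq 0 (nV G))).
  { intros x Hx. apply in_seq0. destruct Hx as [<-|Hx].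
    - destruct Hw as [H1 [_ [<- _]]]. apply step_endpoints_bound; auto.
    - apply in_map_iff in Hx. destruct Hx as [s0 [<- Hs]].
      apply step_endpoints_bound, (walk_edges G T a b _ Hw s0 Hs). }
  pose proof (NoDup_incl_length Hn Hincl) as Hl.
  rewrite length_seq in Hl. simpl in Hl. rewrite length_map in Hl. simpl. lia.
Qed.

Lemma circulation_continues e1 a : (e1 < nE G)%nat -> g e1 <> 0 -> (a = ea G e1 \/ a = eb G e1) ->
  exists e', (e' < nE G)%nat /\ e' <> e1 /\ g e' <> 0 /\ (a = ea G e' \/ a = eb G e').
Proof.
  intros He1 Hg1 Ha. destruct (edge_wf G WF _ He1) as [A1 [A2 [A3 _]]].
  assert (HB : Bmat G e1 a <> 0).
  { rewrite (Bmat_indicator G WF) by auto. unfold vtx_ind.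
    destruct Ha as [->| ->]; rewrite Nat.eqb_refl;
      [destruct (Nat.eqb_spec (ea G e1) (eb G e1)) | destruct (Nat.eqb_spec (eb G e1) (ea G e1))];
      (congruence || lra). }
  assert (Hdiv : divergence G g a = 0) by (apply Hcirc; destruct Ha as [->| ->]; auto).
  destruct (rsum_nonzero _ (fun e => Bmat G e a * g e) e1 He1 Hdiv) as [e' [He' [Hne Hnz]]].
  { intro Hz. apply Rmult_integral in Hz. tauto. }
  exists e'. repeat split; auto.
  - intro Hz. apply Hnz. rewrite Hz. ring.
  - unfold Bmat in Hnz. destruct (Nat.eqb_spec a (ea G e')); auto.
    destruct (Nat.eqb_spec a (eb G e')); auto. lra.
Qed.

Lemma edge_not_on_walk a b st1 q e' : walk G T a b (st1 :: q) -> NoDup (a :: map (dst G) (st1 :: q)) ->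
  e' <> fst st1 -> (a = ea G e' \/ a = eb G e') -> ~ In e' (map fst (st1 :: q)).
Proof.
  intros Hw Hn Hne Ha Hin. apply in_map_iff in Hin. destruct Hin as [st [Hf [<-|Hi]]]; [congruence|].
  apply NoDup_cons_iff in Hn. destruct Hn as [Hn1 _]. apply Hn1.
  assert (Hs : In (src G st) (map (dst G) (st1 :: q))).
  { destruct (walk_src_visited G T _ _ _ st Hw (or_intror Hi)) as [E|]; auto.
    destruct Hw as [_ [_ [H3 Hw']]]. simpl in Hw'.
    destruct (walk_src_visited G T _ _ _ st Hw' Hi); [left|right]; auto. }
  assert (Hd : In (dst G st) (map (dst G) (st1 :: q))) by (right; apply in_map; auto).
  destruct (step_ends G st) as [[E1 E2]|[E1 E2]]; rewrite Hf in E1, E2;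
    destruct Ha as [-> | ->]; first [rewrite <- E1; exact Hs | rewrite <- E2; exact Hd].
Qed.

Lemma closing_step_cycle a b p st' : walk G T a b p -> NoDup (map fst p) ->
  (fst st' < nE G)%nat -> T (fst st') = true -> dst G st' = a -> ~ In (fst st') (map fst p) ->
  In (src G st') (map (dst G) p) -> False.
Proof.
  intros Hw He Hm HT Hdst Hnot Hin. apply Hacyc.
  apply in_map_iff in Hin. destruct Hin as [stk [Hk Hik]].
  apply in_split in Hik. destruct Hik as [p1 [p2 ->]].
  exists (src G st'), (st' :: p1 ++ stk :: nil). split; [congruence|]. split.
  - simpl. split; [exact Hm|]. split; [exact HT|]. split; [reflexivity|]. rewrite Hdst.
    apply walk_app in Hw. destruct Hw as [x [Hx1 Hx2]].
    apply walk_app. exists x. split; auto. destruct Hx2 as [K1 [K2 [K3 _]]]. simpl. auto.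
  - rewrite map_app in He, Hnot. simpl in He, Hnot. simpl. rewrite map_app. simpl. constructor.
    + intro Hin. apply Hnot. apply in_app_or in Hin. apply in_or_app.
      destruct Hin as [|[|[]]]; auto. right. left. auto.
    + replace (map fst p1 ++ fst stk :: map fst p2) with ((map fst p1 ++ fst stk :: nil) ++ map fst p2)
        in He by (rewrite <- app_assoc; reflexivity).
      eapply NoDup_app_remove_r; eauto.
Qed.

Lemma flow_walk_extend a b p : flow_walk a b p -> exists u p', flow_walk u b p' /\ length p' = S (length p).
Proof.
  intros [Hw [Hn [st1 [q [-> Hg1]]]]]. pose proof Hw as [H1 [_ [H3 _]]].
  assert (Ha : a = ea G (fst st1) \/ a = eb G (fst st1))
    by (rewrite <- H3; destruct (step_ends G st1) as [[-> _]|[-> _]]; auto).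
  destruct (circulation_continues (fst st1) a H1 Hg1 Ha) as [e' [He' [Hne [Hge Hae]]]].
  assert (HT : T e' = true) by (destruct (T e') eqn:E; auto; exfalso; apply Hge, Hsupp; auto).
  set (st' := (e', Nat.eqb (eb G e') a)).
  assert (Hdst : dst G st' = a).
  { unfold dst, st'; simpl. destruct (Nat.eqb_spec (eb G e') a); auto. destruct Hae; congruence. }
  assert (Hu : src G st' <> a).
  { rewrite <- Hdst. destruct (edge_wf G WF e' He') as [_ [_ [Hab _]]].
    unfold src, dst, st'; simpl. destruct (Nat.eqb (eb G e') a); auto. }
  pose proof (edge_not_on_walk _ _ _ _ _ Hw Hn Hne Hae) as Hnot.
  destruct (In_dec Nat.eq_dec (src G st') (map (dst G) (st1 :: q))) as [Hin|Hin].
  - exfalso. eapply (closing_step_cycle a b (st1 :: q) st'); eauto.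
    eapply simple_walk_distinct_edges; eauto.
  - exists (src G st'), (st' :: st1 :: q). split; [|reflexivity]. split; [|split].
    + split; [exact He'|]. split; [exact HT|]. split; [reflexivity|]. rewrite Hdst. exact Hw.
    + change (NoDup (src G st' :: dst G st' :: map (dst G) (st1 :: q))). rewrite Hdst.
      constructor; [|exact Hn]. intros [Hx|Hx]; [congruence | contradiction].
    + exists st', (st1 :: q). split; auto.
Qed.

(** By induction on the number [N] of vertices still unvisited. *)
Lemma no_flow_walk N : forall a b p, flow_walk a b p -> (nV G <= length p + N)%nat -> False.
Proof.
  induction N as [|N IH]; intros a b p Hi Hl.
  - pose proof (flow_walk_length a b p Hi). lia.
  - destruct (flow_walk_extend a b p Hi) as [u [p' [Hi' Hl']]]. apply (IH u b p' Hi'). lia.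
Qed.

(** A single [g]-carrying tree edge is already such a walk, so none exists. *)
Theorem forest_circulation_zero e : (e < nE G)%nat -> g e = 0.
Proof.
  intros He. destruct (Req_dec (g e) 0) as [|Hne]; auto. exfalso.
  assert (HT : T e = true) by (destruct (T e) eqn:E; auto; exfalso; apply Hne, Hsupp; auto).
  destruct (edge_wf G WF _ He) as [_ [_ [Hab _]]].
  apply (no_flow_walk (nV G) (ea G e) (eb G e) ((e, true) :: nil)); [|lia].
  split; [|split].
  - simpl. unfold src, dst; simpl. auto.
  - simpl. unfold dst; simpl. constructor; [intros [H|[]]; congruence|].
    constructor; [intros [] | constructor].
  - exists (e, true), nil. auto.
Qed.

End ForestCirculation.

Definition rip (G : graph) (x y : nat -> R) : R := rsum (nE G) (fun j => x j * res G j * y j).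

Section ResistanceInnerProduct.
Variable G : graph.
Hypothesis WF : well_formed G.

Lemma rip_sym x y : rip G x y = rip G y x.
Proof. apply rsum_ext. intros; lra. Qed.

Lemma rip_lin a b x y z : rip G (fun j => a * x j + b * y j) z = a * rip G x z + b * rip G y z.
Proof. unfold rip. rewrite <- !rsum_scal, <- rsum_plus. apply rsum_ext. intros; lra. Qed.

Lemma rip_ext x x' y y' : (forall j, (j < nE G)%nat -> x j = x' j) ->
  (forall j, (j < nE G)%nat -> y j = y' j) -> rip G x y = rip G x' y'.
Proof. intros H1 H2. apply rsum_ext. intros j Hj. rewrite H1, H2; auto. Qed.

Lemma rip_expand x y t :
  rip G (fun j => 1 * x j + t * y j) (fun j => 1 * x j + t * y j)
  = rip G x x + 2 * t * rip G x y + t * t * rip G y y.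
Proof. rewrite rip_lin, (rip_sym x), (rip_sym y), !rip_lin, (rip_sym y x). ring. Qed.

Lemma rip_unit e y : (e < nE G)%nat -> rip G (fun j => if Nat.eqb j e then 1 else 0) y = res G e * y e.
Proof.
  intros He. unfold rip. rewrite <- (rsum_delta (nE G) e (fun j => res G j * y j)) by auto.
  apply rsum_ext. intros j Hj. destruct (Nat.eqb j e); lra.
Qed.

Lemma rip_self_nonneg x : 0 <= rip G x x.
Proof.
  apply rsum_nonneg. intros j Hj. pose proof (res_pos G WF j Hj).
  replace (x j * res G j * x j) with (res G j * (x j * x j)) by ring.
  apply Rmult_le_pos; [lra | apply Rle_0_sqr].
Qed.

Lemma energy_nonneg f : 0 <= energy G f.
Proof. apply rip_self_nonneg. Qed.

Lemma rip_cauchy_schwarz x y : rip G x y * rip G x y <= rip G y y * rip G x x.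
Proof.
  apply discriminant_le; [apply rip_self_nonneg|]. intros t.
  replace (rip G y y * t * t - 2 * rip G x y * t + rip G x x)
    with (rip G (fun j => 1 * x j + (-t) * y j) (fun j => 1 * x j + (-t) * y j))
    by (rewrite rip_expand; ring).
  apply rip_self_nonneg.
Qed.

End ResistanceInnerProduct.

(** Tree paths, tree cycles and tree induced voltages.  The basic tool is that
    a circulation supported on [T] vanishes: two vectors with the same
    divergence that agree off [T] are equal. *)
Section TreeFlows.
Variables (G : graph) (T : nat -> bool) (pth : nat -> nat -> list (nat * bool)) (s : nat).
Hypothesis WF : well_formed G.
Hypothesis HST : spanning_tree G T.
Hypothesis Hpth : forall a b, (a < nV G)%nat -> (b < nV G)%nat -> tree_path G T a b (pth a b).
Hypothesis Hs : (s < nV G)%nat.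

Definition tree_flow (e : nat) : nat -> R := path_flow (pth (ea G e) (eb G e)).

Lemma tree_circulation_zero x : is_circulation G x -> supported_on G T x ->
  forall e, (e < nE G)%nat -> x e = 0.
Proof. intros. apply (forest_circulation_zero G T x WF (proj2 (proj2 HST))); auto. Qed.

Lemma edge_ends_bound e : (e < nE G)%nat -> (ea G e < nV G)%nat /\ (eb G e < nV G)%nat.
Proof. intros H. destruct (edge_wf G WF e H) as [A [B _]]. auto. Qed.

Lemma pth_walk a b : (a < nV G)%nat -> (b < nV G)%nat -> walk G T a b (pth a b).
Proof. intros. apply Hpth; auto. Qed.

Lemma pth_divergence a b c : (a < nV G)%nat -> (b < nV G)%nat ->
  divergence G (path_flow (pth a b)) c = vtx_ind c a - vtx_ind c b.
Proof. intros. apply (walk_flow_divergence G T WF a b), pth_walk; auto. Qed.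

Lemma pth_support a b : (a < nV G)%nat -> (b < nV G)%nat -> supported_on G T (path_flow (pth a b)).
Proof. intros. eapply (walk_flow_support G T), pth_walk; eauto. Qed.

Lemma tree_flow_divergence e c : (e < nE G)%nat ->
  divergence G (tree_flow e) c = divergence G (fun j => if Nat.eqb j e then 1 else 0) c.
Proof.
  intros He. destruct (edge_ends_bound e He). unfold tree_flow.
  rewrite pth_divergence, divergence_unit, (Bmat_indicator G WF) by auto. reflexivity.
Qed.

Lemma cyc_circulation e : (e < nE G)%nat -> is_circulation G (cyc G pth e).
Proof.
  intros He c Hc.
  rewrite (divergence_ext G _ (fun j => 1 * (if Nat.eqb j e then 1 else 0) + (-1) * tree_flow e j))
    by (intros; unfold cyc, tree_flow; lra).
  rewrite divergence_lin, <- tree_flow_divergence by auto. lra.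
Qed.

Lemma cyc_off_tree e j : (e < nE G)%nat -> (j < nE G)%nat -> T j = false ->
  cyc G pth e j = if Nat.eqb j e then 1 else 0.
Proof.
  intros He Hj HTj. destruct (edge_ends_bound e He). unfold cyc.
  rewrite (pth_support (ea G e) (eb G e)) by auto. lra.
Qed.

Lemma tree_flow_tree_edge e : (e < nE G)%nat -> T e = true ->
  forall j, (j < nE G)%nat -> tree_flow e j = if Nat.eqb j e then 1 else 0.
Proof.
  intros He HT j Hj. destruct (edge_ends_bound e He).
  enough (1 * tree_flow e j + (-1) * (if Nat.eqb j e then 1 else 0) = 0) by lra.
  apply (tree_circulation_zero (fun j => 1 * tree_flow e j + (-1) * (if Nat.eqb j e then 1 else 0))); auto.
  - intros c Hc. rewrite divergence_lin, tree_flow_divergence by auto. lra.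
  - intros k Hk HTk. unfold tree_flow. rewrite (pth_support (ea G e) (eb G e)) by auto.
    destruct (Nat.eqb_spec k e); [congruence | lra].
Qed.

Lemma tree_path_concat a b j : (a < nV G)%nat -> (b < nV G)%nat -> (j < nE G)%nat ->
  path_flow (pth a s) j = path_flow (pth a b) j + path_flow (pth b s) j.
Proof.
  intros Ha Hb Hj.
  set (d := fun j => 1 * path_flow (pth a s) j + (-1) * (1 * path_flow (pth a b) j + 1 * path_flow (pth b s) j)).
  enough (d j = 0) by (unfold d in *; cbv beta in *; lra).
  apply tree_circulation_zero; auto.
  - intros c Hc. unfold d. rewrite !divergence_lin, !pth_divergence by auto. lra.
  - intros k Hk HTk. unfold d. rewrite !(pth_support _ _ Ha Hs), (pth_support _ _ Ha Hb),
      (pth_support _ _ Hb Hs) by auto. lra.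
Qed.

Lemma volt_rip f a : (a < nV G)%nat -> volt G pth s f a = rip G (path_flow (pth a s)) f.
Proof.
  intros Ha. unfold rip.
  rewrite (rsum_ext _ _ (fun j => path_flow (pth a s) j * (res G j * f j))) by (intros; lra).
  rewrite (path_flow_pairing G)
    by (intros st Hi; eapply (walk_edges G T a s); eauto; apply pth_walk; auto).
  apply lsum_ext. intros st _. unfold step_sign. lra.
Qed.

Lemma volt_drop f e : (e < nE G)%nat ->
  volt G pth s f (ea G e) - volt G pth s f (eb G e) = rip G (tree_flow e) f.
Proof.
  intros He. destruct (edge_ends_bound e He). rewrite !volt_rip by auto.
  unfold rip, tree_flow. rewrite <- rsum_minus. apply rsum_ext. intros j Hj.
  rewrite (tree_path_concat (ea G e) (eb G e) j) by auto. lra.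
Qed.

Lemma volt_drop_tree f e : (e < nE G)%nat -> T e = true ->
  volt G pth s f (ea G e) - volt G pth s f (eb G e) = res G e * f e.
Proof.
  intros He HT. rewrite volt_drop, <- (rip_unit G) by auto.
  apply rip_ext; [|auto]. intros; apply tree_flow_tree_edge; auto.
Qed.

Lemma volt_drop_off f e : (e < nE G)%nat ->
  volt G pth s f (ea G e) - volt G pth s f (eb G e) = res G e * f e - Defs.Delta G pth e f.
Proof.
  intros He. rewrite volt_drop by auto. unfold Defs.Delta. fold (rip G f (cyc G pth e)).
  rewrite (rip_sym G f), <- (rip_unit G e f) by auto.
  rewrite (rip_ext G (cyc G pth e) (fun j => 1 * (if Nat.eqb j e then 1 else 0) + (-1) * tree_flow e j) f f)
    by (intros; unfold cyc, tree_flow; lra).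
  rewrite rip_lin. lra.
Qed.

End TreeFlows.

Definition lap_energy (G : graph) (x : nat -> R) : R :=
  rsum (nE G) (fun e => (x (ea G e) - x (eb G e)) * (x (ea G e) - x (eb G e)) / res G e).

Section Laplacian.
Variable G : graph.
Hypothesis WF : well_formed G.

Lemma lap_energy_nonneg x : 0 <= lap_energy G x.
Proof.
  apply rsum_nonneg. intros e He. pose proof (res_pos G WF e He). unfold Rdiv.
  apply Rmult_le_pos; [apply Rle_0_sqr | apply Rlt_le, Rinv_0_lt_compat; auto].
Qed.

Lemma Bmat_pairing e x : (e < nE G)%nat ->
  rsum (nV G) (fun u => Bmat G e u * x u) = x (ea G e) - x (eb G e).
Proof.
  intros He. destruct (edge_wf G WF e He) as [Ha [Hb _]].
  rewrite (rsum_ext _ _ (fun u => (if Nat.eqb u (ea G e) then x u else 0)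
                                 - (if Nat.eqb u (eb G e) then x u else 0))).
  - rewrite rsum_minus, !rsum_delta by auto. reflexivity.
  - intros u Hu. rewrite (Bmat_indicator G WF) by auto. unfold vtx_ind.
    destruct (Nat.eqb u (ea G e)); destruct (Nat.eqb u (eb G e)); lra.
Qed.

Lemma lap_apply x u : matvec (nV G) (Lap G) x u =
  rsum (nE G) (fun e => Bmat G e u * / res G e * (x (ea G e) - x (eb G e))).
Proof.
  unfold matvec, Lap.
  rewrite (rsum_ext _ _ (fun v => rsum (nE G) (fun e => Bmat G e u * / res G e * (Bmat G e v * x v))))
    by (intros; rewrite <- rsum_scalr; apply rsum_ext; intros; ring).
  rewrite rsum_swap. apply rsum_ext. intros e He. rewrite rsum_scal, Bmat_pairing by auto. reflexivity.
Qed.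

Lemma lap_quadratic x :
  rsum (nV G) (fun u => x u * matvec (nV G) (Lap G) x u) = lap_energy G x.
Proof.
  rewrite (rsum_ext _ _ (fun u => rsum (nE G)
             (fun e => Bmat G e u * x u * (/ res G e * (x (ea G e) - x (eb G e)))))).
  2:{ intros u Hu. rewrite lap_apply, <- rsum_scal. apply rsum_ext. intros; ring. }
  rewrite rsum_swap. apply rsum_ext. intros e He. rewrite rsum_scalr, Bmat_pairing by auto.
  unfold Rdiv. ring.
Qed.

Lemma Lnorm_lap_energy x : Lnorm G x = sqrt (lap_energy G x).
Proof.
  unfold Lnorm. rewrite <- lap_quadratic. f_equal. apply rsum_ext. intros u Hu.
  unfold matvec. rewrite <- rsum_scal. apply rsum_ext. intros; ring.
Qed.

Lemma lap_kernel_no_drop d : (forall u, (u < nV G)%nat -> matvec (nV G) (Lap G) d u = 0) ->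
  forall e, (e < nE G)%nat -> d (ea G e) = d (eb G e).
Proof.
  intros Hd e He.
  assert (HQ : lap_energy G d = 0).
  { rewrite <- lap_quadratic. transitivity (rsum (nV G) (fun _ => 0)); [|apply rsum_zero].
    apply rsum_ext. intros u Hu. rewrite Hd; auto. ring. }
  assert (Hnn : forall e, (e < nE G)%nat ->
            0 <= (d (ea G e) - d (eb G e)) * (d (ea G e) - d (eb G e)) / res G e).
  { intros e' He'. pose proof (res_pos G WF e' He'). unfold Rdiv.
    apply Rmult_le_pos; [apply Rle_0_sqr | apply Rlt_le, Rinv_0_lt_compat; auto]. }
  pose proof (rsum_zero_nonneg _ _ Hnn HQ e He) as Hz. cbv beta in Hz.
  pose proof (res_pos G WF e He).
  assert (Hsq : (d (ea G e) - d (eb G e)) * (d (ea G e) - d (eb G e)) = 0).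
  { unfold Rdiv in Hz. apply Rmult_integral in Hz. destruct Hz as [|Hz]; auto.
    exfalso. apply (Rinv_neq_0_compat (res G e)); lra. }
  apply Rmult_integral in Hsq. lra.
Qed.

(** If [L psi = chi] and [X] is the pseudoinverse of [L], then [X chi] and [psi]
    differ by an element of the kernel ([L X L = L]), hence have equal drops. *)
Lemma pinv_same_drops X psi chi : is_pinv (nV G) (Lap G) X ->
  (forall u, (u < nV G)%nat -> matvec (nV G) (Lap G) psi u = chi u) ->
  forall e, (e < nE G)%nat ->
  matvec (nV G) X chi (ea G e) - matvec (nV G) X chi (eb G e) = psi (ea G e) - psi (eb G e).
Proof.
  intros Hpinv Hpsi e He. set (L := Lap G). set (phi := matvec (nV G) X chi).
  assert (HLX : forall u, (u < nV G)%nat -> matvec (nV G) L phi u = matvec (nV G) L psi u).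
  { intros u Hu. unfold phi, matvec at 1 2.
    transitivity (rsum (nV G) (fun v => rsum (nV G) (fun k => rsum (nV G)
                    (fun l => L u v * X v k * L k l * psi l)))).
    { apply rsum_ext. intros v Hv. unfold matvec. rewrite <- rsum_scal. apply rsum_ext. intros k Hk.
      rewrite <- (Hpsi k Hk). unfold matvec. fold L. rewrite <- !rsum_scal. apply rsum_ext. intros; ring. }
    rewrite (rsum_ext _ _ (fun v => rsum (nV G) (fun l => rsum (nV G)
               (fun k => L u v * X v k * L k l * psi l)))) by (intros; apply rsum_swap).
    rewrite rsum_swap. apply rsum_ext. intros l Hl.
    destruct (Hpinv u l Hu Hl) as [H1 _]. fold L in H1. rewrite <- H1.
    unfold matmul. rewrite <- rsum_scalr. apply rsum_ext. intros v Hv.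
    rewrite <- rsum_scal, <- rsum_scalr. apply rsum_ext. intros; ring. }
  pose proof (lap_kernel_no_drop (fun a => phi a - psi a)) as Hk. cbv beta in Hk.
  enough (phi (ea G e) - psi (ea G e) = phi (eb G e) - psi (eb G e)) by (fold phi; lra).
  apply Hk; auto. intros u Hu. unfold matvec in *.
  transitivity (rsum (nV G) (fun k => L u k * phi k) - rsum (nV G) (fun k => L u k * psi k)).
  - rewrite <- rsum_minus. apply rsum_ext. intros; unfold L; ring.
  - rewrite HLX by auto. ring.
Qed.

End Laplacian.

Section Optimality.
Variables (G : graph) (T : nat -> bool) (pth : nat -> nat -> list (nat * bool)) (s : nat).
Hypothesis WF : well_formed G.
Hypothesis HST : spanning_tree G T.
Hypothesis Hpth : forall a b, (a < nV G)%nat -> (b < nV G)%nat -> tree_path G T a b (pth a b).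
Hypothesis Hs : (s < nV G)%nat.
Variables (chi fstar : nat -> R).
Hypothesis Hfs : feasible G chi fstar.
Hypothesis Hmin : forall f, feasible G chi f -> energy G fstar <= energy G f.

Definition gap (f : nat -> R) : R := energy G f - energy G fstar.

Definition delta_sq_sum (f : nat -> R) : R :=
  rsum (nE G) (fun e => if T e then 0 else Defs.Delta G pth e f * Defs.Delta G pth e f / res G e).

Lemma energy_rip f : energy G f = rip G f f.
Proof. reflexivity. Qed.

Lemma Delta_rip e f : Defs.Delta G pth e f = rip G f (cyc G pth e).
Proof. reflexivity. Qed.

Lemma Rcyc_rip e : Rcyc G pth e = rip G (cyc G pth e) (cyc G pth e).
Proof. reflexivity. Qed.

Lemma gap_nonneg f : feasible G chi f -> 0 <= gap f.
Proof. intros Hf. unfold gap. apply Hmin in Hf. lra. Qed.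

Lemma cycle_shift_feasible e f t : (e < nE G)%nat -> feasible G chi f ->
  feasible G chi (fun j => 1 * f j + t * cyc G pth e j).
Proof.
  intros He Hf c Hc. fold (divergence G (fun j => 1 * f j + t * cyc G pth e j) c).
  rewrite divergence_lin, (cyc_circulation G T pth WF Hpth e He c Hc). unfold divergence.
  rewrite Hf by auto. lra.
Qed.

Lemma update_feasible e f : (e < nE G)%nat -> feasible G chi f -> feasible G chi (update G pth e f).
Proof.
  intros He Hf c Hc. rewrite <- (cycle_shift_feasible e f (- (Defs.Delta G pth e f / Rcyc G pth e)) He Hf c Hc).
  apply rsum_ext. intros. unfold update. ring.
Qed.

Lemma fstar_cycle_orthogonal e : (e < nE G)%nat -> rip G fstar (cyc G pth e) = 0.
Proof.
  intros He.
  assert (H : forall t, 0 <= rip G (cyc G pth e) (cyc G pth e) * t * t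
                            - 2 * (- rip G fstar (cyc G pth e)) * t + 0).
  { intros t. pose proof (Hmin _ (cycle_shift_feasible e fstar t He Hfs)) as Ht.
    rewrite !energy_rip, (rip_expand G) in Ht. lra. }
  apply discriminant_le in H; [nra | apply (rip_self_nonneg G WF)].
Qed.

(** Cycle decomposition: [f - fstar = sum_(e notin T) (f_e - fstar_e) c_e], since the
    difference of the two sides is a circulation vanishing off [T]. *)
Lemma cycle_decomposition f : feasible G chi f -> forall j, (j < nE G)%nat ->
  f j - fstar j = rsum (nE G) (fun e => if T e then 0 else (f e - fstar e) * cyc G pth e j).
Proof.
  intros Hf j Hj.
  set (F := fun e j => if T e then 0 else (f e - fstar e) * cyc G pth e j).
  set (d := fun j => 1 * (1 * f j + (-1) * fstar j) + (-1) * rsum (nE G) (fun e => F e j)).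
  enough (d j = 0) by (unfold d, F in *; cbv beta in *; lra).
  apply (tree_circulation_zero G T WF HST); auto.
  - intros c Hc. unfold d. rewrite !divergence_lin. unfold divergence at 1 2. rewrite !Hf, !Hfs by auto.
    unfold divergence.
    rewrite (rsum_ext _ _ (fun e => rsum (nE G) (fun k => Bmat G e c * F k e)))
      by (intros; rewrite <- rsum_scal; reflexivity).
    rewrite rsum_swap, (rsum_zero_ext (nE G)); [lra|].
    intros e He. unfold F. destruct (T e).
    + apply rsum_zero_ext. intros; ring.
    + transitivity ((f e - fstar e) * divergence G (cyc G pth e) c).
      * unfold divergence. rewrite <- rsum_scal. apply rsum_ext. intros; ring.
      * rewrite (cyc_circulation G T pth WF Hpth e He c Hc). ring.
  - intros k Hk HTk. unfold d.
    assert (Hsum : rsum (nE G) (fun e => F e k) = f k - fstar k).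
    { rewrite <- (rsum_delta (nE G) k (fun e => f e - fstar e)) by auto. apply rsum_ext.
      intros e He. unfold F. rewrite (cyc_off_tree G T pth WF) by auto.
      destruct (Nat.eqb_spec e k) as [->|Hne]; [rewrite HTk, Nat.eqb_refl; ring|].
      destruct (Nat.eqb_spec k e); [congruence|]. destruct (T e); ring. }
    rewrite Hsum. ring.
Qed.

Lemma rip_cycle_decomposition f u : feasible G chi f ->
  rip G u (fun j => f j - fstar j)
  = rsum (nE G) (fun e => if T e then 0 else (f e - fstar e) * rip G u (cyc G pth e)).
Proof.
  intros Hf. unfold rip at 1.
  rewrite (rsum_ext _ _ (fun j => rsum (nE G) (fun e => u j * res G j *
             (if T e then 0 else (f e - fstar e) * cyc G pth e j)))).
  2:{ intros j Hj. rewrite rsum_scal, cycle_decomposition by auto. reflexivity. }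
  rewrite rsum_swap. apply rsum_ext. intros e He. destruct (T e).
  - apply rsum_zero_ext. intros; ring.
  - unfold rip. rewrite <- rsum_scal. apply rsum_ext. intros; ring.
Qed.

Lemma Delta_error f e : (e < nE G)%nat ->
  Defs.Delta G pth e f = rip G (fun j => f j - fstar j) (cyc G pth e).
Proof.
  intros He. rewrite Delta_rip,
    (rip_ext G (fun j => f j - fstar j) (fun j => 1 * f j + (-1) * fstar j) (cyc G pth e) (cyc G pth e))
    by (intros; ring).
  rewrite (rip_lin G), fstar_cycle_orthogonal by auto. ring.
Qed.

(** Pythagoras: [gap f = ||f - fstar||_R^2]. *)
Lemma gap_error_norm f : feasible G chi f -> gap f = rip G (fun j => f j - fstar j) (fun j => f j - fstar j).
Proof.
  intros Hf. unfold gap. rewrite !energy_rip.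
  assert (H0 : rip G fstar (fun j => f j - fstar j) = 0).
  { rewrite rip_cycle_decomposition by auto. apply rsum_zero_ext. intros e He.
    destruct (T e); [reflexivity|]. rewrite fstar_cycle_orthogonal by auto. ring. }
  set (g := fun j => f j - fstar j) in *.
  rewrite (rip_ext G f (fun j => 1 * fstar j + 1 * g j) f (fun j => 1 * fstar j + 1 * g j))
    by (intros; unfold g; ring).
  rewrite (rip_expand G), H0. ring.
Qed.

Lemma gap_residual_sum f : feasible G chi f ->
  gap f = rsum (nE G) (fun e => if T e then 0 else (f e - fstar e) * Defs.Delta G pth e f).
Proof.
  intros Hf. rewrite gap_error_norm, rip_cycle_decomposition by auto.
  apply rsum_ext. intros e He. destruct (T e); [reflexivity|]. rewrite Delta_error by auto.
  reflexivity.
Qed.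

(** Cauchy–Schwarz on each cycle: [delta_sq_sum f <= tau * gap f]. *)
Lemma delta_sq_sum_le f : feasible G chi f -> delta_sq_sum f <= tau G T pth * gap f.
Proof.
  intros Hf. unfold tau. rewrite <- rsum_scalr. apply rsum_le. intros e He.
  pose proof (res_pos G WF e He). destruct (T e); [lra|].
  assert (Hcs : Defs.Delta G pth e f * Defs.Delta G pth e f <= Rcyc G pth e * gap f).
  { rewrite Delta_error, Rcyc_rip, gap_error_norm by auto. apply (rip_cauchy_schwarz G WF). }
  unfold Rdiv. replace (Rcyc G pth e * / res G e * gap f) with (Rcyc G pth e * gap f * / res G e) by ring.
  apply Rmult_le_compat_r; [apply Rlt_le, Rinv_0_lt_compat|]; auto.
Qed.

Definition psi : nat -> R := volt G pth s fstar.

(** Off the tree the residual [Delta_e(fstar)] vanishes, so every drop of [psi]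
    is Ohm's law [r_e fstar_e]. *)
Lemma psi_drop e : (e < nE G)%nat -> psi (ea G e) - psi (eb G e) = res G e * fstar e.
Proof.
  intros He. unfold psi. destruct (T e) eqn:HT.
  - apply (volt_drop_tree G T); auto.
  - rewrite (volt_drop_off G T) by auto. rewrite Delta_rip, fstar_cycle_orthogonal by auto. ring.
Qed.

(** Each drop of [psi] is [r_e fstar_e], so [L psi = B^T fstar = chi]. *)
Lemma lap_psi u : (u < nV G)%nat -> matvec (nV G) (Lap G) psi u = chi u.
Proof.
  intros Hu. rewrite (lap_apply G WF), <- (Hfs u Hu). apply rsum_ext. intros e He.
  rewrite psi_drop by auto. pose proof (res_pos G WF e He). field. lra.
Qed.

(** Edge by edge, the voltage error of [f] is [r_e (f_e - fstar_e)] on tree edges and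
    [r_e (f_e - fstar_e) - Delta_e(f)] off the tree; summing squares gives [S(f) - gap f]. *)
Lemma voltage_error_energy f : feasible G chi f ->
  lap_energy G (fun a => volt G pth s f a - psi a) = delta_sq_sum f - gap f.
Proof.
  intros Hf.
  assert (E : lap_energy G (fun a => volt G pth s f a - psi a) =
    rip G (fun j => f j - fstar j) (fun j => f j - fstar j) - 2 * gap f + delta_sq_sum f).
  { rewrite gap_residual_sum by auto. unfold delta_sq_sum, rip.
    rewrite <- rsum_scal, <- rsum_minus, <- rsum_plus. apply rsum_ext. intros e He.
    pose proof (res_pos G WF e He). pose proof (psi_drop e He) as Hp.
    replace (volt G pth s f (ea G e) - psi (ea G e) - (volt G pth s f (eb G e) - psi (eb G e)))
      with ((volt G pth s f (ea G e) - volt G pth s f (eb G e)) - (psi (ea G e) - psi (eb G e))) by ring.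
    rewrite Hp. destruct (T e) eqn:HT.
    - rewrite (volt_drop_tree G T) by auto. field. lra.
    - rewrite (volt_drop_off G T) by auto. field. lra. }
  rewrite E, gap_error_norm by auto. ring.
Qed.

(** Nonnegativity of the Laplacian form turns the identity above into [gap f <= S(f)]. *)
Lemma gap_le_delta_sq_sum f : feasible G chi f -> gap f <= delta_sq_sum f.
Proof.
  intros Hf. pose proof (voltage_error_energy f Hf).
  pose proof (lap_energy_nonneg G WF (fun a => volt G pth s f a - psi a)). lra.
Qed.

Variable X : nat -> nat -> R.
Hypothesis Hpinv : is_pinv (nV G) (Lap G) X.

(** [L^dagger chi] and [psi] have the same drops, so the voltage error is measured against [psi]. *)
Lemma voltage_error_norm f : feasible G chi f ->
  Lnorm G (fun a => volt G pth s f a - matvec (nV G) X chi a) = sqrt (delta_sq_sum f - gap f).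
Proof.
  intros Hf. rewrite (Lnorm_lap_energy G WF), <- voltage_error_energy by auto. f_equal.
  apply rsum_ext. intros e He.
  pose proof (pinv_same_drops G WF X psi chi Hpinv lap_psi e He).
  replace (volt G pth s f (ea G e) - matvec (nV G) X chi (ea G e)
           - (volt G pth s f (eb G e) - matvec (nV G) X chi (eb G e)))
    with (volt G pth s f (ea G e) - psi (ea G e) - (volt G pth s f (eb G e) - psi (eb G e))) by lra.
  reflexivity.
Qed.

Lemma pinv_norm : Lnorm G (matvec (nV G) X chi) = sqrt (energy G fstar).
Proof.
  rewrite (Lnorm_lap_energy G WF). f_equal. apply rsum_ext. intros e He.
  rewrite (pinv_same_drops G WF X psi chi Hpinv lap_psi e He), psi_drop by auto.
  pose proof (res_pos G WF e He). field. lra.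
Qed.

End Optimality.

Section SimpleSolver.
Variables (G : graph) (T : nat -> bool) (pth : nat -> nat -> list (nat * bool)) (s : nat).
Hypothesis WF : well_formed G.
Hypothesis HST : spanning_tree G T.
Hypothesis Hpth : forall a b, (a < nV G)%nat -> (b < nV G)%nat -> tree_path G T a b (pth a b).
Hypothesis Hs : (s < nV G)%nat.
Variables (chi fstar : nat -> R).
Hypothesis Hfs : feasible G chi fstar.
Hypothesis Hmin : forall f, feasible G chi f -> energy G fstar <= energy G f.
Hypothesis Hoff : exists e, (e < nE G)%nat /\ T e = false.

Notation tau := (tau G T pth).

(** Off the tree, [R_e >= r_e] because [c_e] is [1] on [e]. *)
Lemma Rcyc_ge_res e : (e < nE G)%nat -> T e = false -> res G e <= Rcyc G pth e.
Proof.
  intros He HT. rewrite Rcyc_rip.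
  assert (Hnn : forall j, (j < nE G)%nat -> 0 <= cyc G pth e j * res G j * cyc G pth e j).
  { intros j Hj. pose proof (res_pos G WF j Hj).
    replace (cyc G pth e j * res G j * cyc G pth e j) with (res G j * (cyc G pth e j * cyc G pth e j))
      by ring. apply Rmult_le_pos; [lra | apply Rle_0_sqr]. }
  pose proof (rsum_single_le _ _ e Hnn He) as H. cbv beta in H.
  rewrite (cyc_off_tree G T pth WF Hpth e e), Nat.eqb_refl in H by auto. unfold rip. lra.
Qed.

Lemma tau_term_nonneg e : (e < nE G)%nat -> 0 <= (if T e then 0 else Rcyc G pth e / res G e).
Proof.
  intros He. destruct (T e); [lra|]. pose proof (res_pos G WF e He). unfold Rdiv.
  apply Rmult_le_pos; [rewrite Rcyc_rip; apply (rip_self_nonneg G WF) | apply Rlt_le, Rinv_0_lt_compat; auto].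
Qed.

(** Some edge lies off the tree and contributes [R_e / r_e >= 1] to [tau]. *)
Lemma tau_ge_1 : 1 <= tau.
Proof.
  destruct Hoff as [e0 [He0 HT0]].
  pose proof (rsum_single_le _ _ e0 tau_term_nonneg He0) as H. cbv beta in H. rewrite HT0 in H.
  pose proof (Rcyc_ge_res e0 He0 HT0). pose proof (res_pos G WF e0 He0).
  assert (1 <= Rcyc G pth e0 / res G e0).
  { apply (Rmult_le_reg_r (res G e0)); auto. unfold Rdiv. rewrite Rmult_assoc, Rinv_l by lra. lra. }
  unfold Defs.tau. lra.
Qed.

Definition sample_weight (e : nat) : R := if T e then 0 else prob G T pth e.

Lemma sample_weight_nonneg e : (e < nE G)%nat -> 0 <= sample_weight e.
Proof.
  intros He. pose proof (tau_term_nonneg e He). pose proof tau_ge_1.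
  unfold sample_weight, prob. destruct (T e); [lra|]. pose proof (res_pos G WF e He).
  replace (Rcyc G pth e / (res G e * tau)) with (Rcyc G pth e / res G e * / tau) by (field; lra).
  apply Rmult_le_pos; auto. apply Rlt_le, Rinv_0_lt_compat. lra.
Qed.

Lemma sample_weight_sum : rsum (nE G) sample_weight = 1.
Proof.
  pose proof tau_ge_1.
  transitivity (rsum (nE G) (fun e => if T e then 0 else Rcyc G pth e / res G e) * / tau).
  - rewrite <- rsum_scalr. apply rsum_ext. intros e He. unfold sample_weight, prob.
    pose proof (res_pos G WF e He). destruct (T e); [lra|]. field. lra.
  - change (tau * / tau = 1). field. lra.
Qed.

Lemma expect_step k g f :
  expect G T pth (S k) g f = rsum (nE G) (fun e => sample_weight e * expect G T pth k g (update G pth e f)).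
Proof.
  change (rsum (nE G) (fun e => if T e then 0 else prob G T pth e * expect G T pth k g (update G pth e f))
          = rsum (nE G) (fun e => sample_weight e * expect G T pth k g (update G pth e f))).
  apply rsum_ext. intros e He. unfold sample_weight. destruct (T e); ring.
Qed.

Lemma energy_update e f : (e < nE G)%nat -> T e = false ->
  energy G (update G pth e f) = energy G f - Defs.Delta G pth e f * Defs.Delta G pth e f / Rcyc G pth e.
Proof.
  intros He HT. pose proof (Rcyc_ge_res e He HT). pose proof (res_pos G WF e He).
  set (t := - (Defs.Delta G pth e f / Rcyc G pth e)).
  rewrite !energy_rip, (rip_ext G (update G pth e f) (fun j => 1 * f j + t * cyc G pth e j)
     (update G pth e f) (fun j => 1 * f j + t * cyc G pth e j)) by (intros; unfold update, t; lra).
  rewrite (rip_expand G), <- Delta_rip, <- Rcyc_rip. unfold t. field. lra.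
Qed.

Lemma expected_gap_step f : feasible G chi f ->
  rsum (nE G) (fun e => sample_weight e * gap G fstar (update G pth e f)) <= (1 - / tau) * gap G fstar f.
Proof.
  intros Hf. pose proof tau_ge_1.
  assert (E : rsum (nE G) (fun e => sample_weight e * gap G fstar (update G pth e f))
              = rsum (nE G) sample_weight * gap G fstar f - delta_sq_sum G T pth f * / tau).
  { unfold delta_sq_sum. rewrite <- !rsum_scalr, <- rsum_minus. apply rsum_ext. intros e He.
    unfold sample_weight, prob. destruct (T e) eqn:HT; [lra|]. unfold gap.
    rewrite energy_update by auto.
    pose proof (Rcyc_ge_res e He HT). pose proof (res_pos G WF e He). field. repeat split; lra. }
  rewrite E, sample_weight_sum.
  pose proof (gap_le_delta_sq_sum G T pth s WF HST Hpth Hs chi fstar Hfs Hmin f Hf).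
  assert (gap G fstar f * / tau <= delta_sq_sum G T pth f * / tau)
    by (apply Rmult_le_compat_r; auto; apply Rlt_le, Rinv_0_lt_compat; lra).
  lra.
Qed.

Lemma contraction_bounds : 0 <= 1 - / tau < 1.
Proof.
  pose proof tau_ge_1. split.
  - assert (/ tau <= 1) by (rewrite <- Rinv_1; apply Rinv_le_contravar; lra). lra.
  - assert (0 < / tau) by (apply Rinv_0_lt_compat; lra). lra.
Qed.

Lemma expected_energy_bound K : forall f, feasible G chi f ->
  expect G T pth K (energy G) f <= energy G fstar + (1 - / tau) ^ K * gap G fstar f.
Proof.
  induction K as [|k IH]; intros f Hf.
  - simpl. unfold gap. lra.
  - rewrite expect_step. pose proof contraction_bounds as [Hq _].
    pose proof (pow_le _ k Hq).
    apply Rle_trans with (rsum (nE G) (fun e => sample_weight e *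
                                   (energy G fstar + (1 - / tau) ^ k * gap G fstar (update G pth e f)))).
    + apply rsum_le. intros e He. apply Rmult_le_compat_l; [apply sample_weight_nonneg; auto|].
      apply IH, (update_feasible G T pth WF Hpth chi); auto.
    + rewrite (rsum_ext _ _ (fun e => sample_weight e * energy G fstar
                 + (1 - / tau) ^ k * (sample_weight e * gap G fstar (update G pth e f)))) by (intros; ring).
      rewrite rsum_plus, rsum_scalr, rsum_scal, sample_weight_sum.
      pose proof (expected_gap_step f Hf). simpl pow. nra.
Qed.

Variable X : nat -> nat -> R.
Hypothesis Hpinv : is_pinv (nV G) (Lap G) X.

(** After [K] steps: [E ||v_K - L^dagger chi||_L <= sqrt (tau (1 - 1/tau)^K gap f)],
    using [||v - L^dagger chi||_L^2 <= S(f) <= tau gap f] and Jensen at each step. *)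
Lemma expected_voltage_error_bound K : forall f, feasible G chi f ->
  expect G T pth K (fun f => Lnorm G (fun a => volt G pth s f a - matvec (nV G) X chi a)) f
  <= sqrt (tau * (1 - / tau) ^ K * gap G fstar f).
Proof.
  pose proof tau_ge_1. pose proof contraction_bounds as [Hq _].
  induction K as [|k IH]; intros f Hf.
  - simpl. rewrite (voltage_error_norm G T pth s WF HST Hpth Hs chi fstar Hfs Hmin X Hpinv) by auto.
    apply sqrt_le_1_alt.
    pose proof (delta_sq_sum_le G T pth WF HST Hpth chi fstar Hfs Hmin f Hf).
    pose proof (gap_nonneg G chi fstar Hmin f Hf). nra.
  - rewrite expect_step. pose proof (pow_le _ k Hq).
    apply Rle_trans with (rsum (nE G) (fun e => sample_weight e *
                                   sqrt (tau * (1 - / tau) ^ k * gap G fstar (update G pth e f)))).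
    + apply rsum_le. intros e He. apply Rmult_le_compat_l; [apply sample_weight_nonneg; auto|].
      apply IH, (update_feasible G T pth WF Hpth chi); auto.
    + eapply Rle_trans; [apply sqrt_jensen|].
      * apply sample_weight_nonneg.
      * apply sample_weight_sum.
      * intros e He.
        pose proof (gap_nonneg G chi fstar Hmin _ (update_feasible G T pth WF Hpth chi e f He Hf)).
        apply Rmult_le_pos; [apply Rmult_le_pos; lra | auto].
      * apply sqrt_le_1_alt.
        rewrite (rsum_ext _ _ (fun e => tau * (1 - / tau) ^ k * (sample_weight e * gap G fstar (update G pth e f))))
          by (intros; ring).
        rewrite rsum_scal. pose proof (expected_gap_step f Hf). simpl pow.
        assert (0 <= tau * (1 - / tau) ^ k) by (apply Rmult_le_pos; lra).
        replace (tau * ((1 - / tau) * (1 - / tau) ^ k) * gap G fstar f)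
          with (tau * (1 - / tau) ^ k * ((1 - / tau) * gap G fstar f)) by ring.
        apply Rmult_le_compat_l; auto.
Qed.

End SimpleSolver.

(** The starting tree flow: [f_0 = sum_e fstar_e pi_e], so by Cauchy–Schwarz
    [xi(f_0) <= st(T) xi(fstar)]. *)
Section InitialFlow.
Variables (G : graph) (T : nat -> bool) (pth : nat -> nat -> list (nat * bool)).
Hypothesis WF : well_formed G.
Hypothesis HST : spanning_tree G T.
Hypothesis Hpth : forall a b, (a < nV G)%nat -> (b < nV G)%nat -> tree_path G T a b (pth a b).
Variables (chi fstar f0 : nat -> R).
Hypothesis Hfs : feasible G chi fstar.
Hypothesis Hf0 : feasible G chi f0.
Hypothesis Hf0s : supported_on G T f0.

(** Both sides have divergence [chi] and are supported on [T], so they coincide. *)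
Lemma initial_flow_decomposition j : (j < nE G)%nat ->
  f0 j = rsum (nE G) (fun e => fstar e * tree_flow G pth e j).
Proof.
  intros Hj. set (d := fun j => 1 * f0 j + (-1) * rsum (nE G) (fun e => fstar e * tree_flow G pth e j)).
  enough (d j = 0) by (unfold d in *; cbv beta in *; lra).
  apply (tree_circulation_zero G T WF HST); auto.
  - intros c Hc. unfold d. rewrite divergence_lin. unfold divergence at 1. rewrite Hf0 by auto.
    unfold divergence.
    rewrite (rsum_ext _ _ (fun e => rsum (nE G) (fun k => Bmat G e c * (fstar k * tree_flow G pth k e))))
      by (intros; rewrite <- rsum_scal; reflexivity).
    rewrite rsum_swap, (rsum_ext _ _ (fun k => Bmat G k c * fstar k)).
    + rewrite Hfs by auto. ring.
    + intros k Hk. rewrite Rmult_comm. transitivity (fstar k * divergence G (tree_flow G pth k) c).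
      * unfold divergence. rewrite <- rsum_scal. apply rsum_ext. intros; ring.
      * rewrite (tree_flow_divergence G T pth WF Hpth), divergence_unit by auto. reflexivity.
  - intros k Hk HTk. unfold d. rewrite Hf0s by auto. rewrite rsum_zero_ext; [ring|].
    intros e He. destruct (edge_ends_bound G WF e He). unfold tree_flow.
    rewrite (pth_support G T pth Hpth (ea G e) (eb G e)) by auto. ring.
Qed.

Lemma initial_energy_pairing : energy G f0 = rsum (nE G) (fun e => fstar e * rip G (tree_flow G pth e) f0).
Proof.
  rewrite energy_rip. unfold rip at 1.
  rewrite (rsum_ext _ _ (fun j => rsum (nE G) (fun e => fstar e * (tree_flow G pth e j * res G j * f0 j)))).
  - rewrite rsum_swap. apply rsum_ext. intros e He. apply rsum_scal.
  - intros j Hj. rewrite (initial_flow_decomposition j Hj) at 1. rewrite <- !rsum_scalr.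
    apply rsum_ext. intros; ring.
Qed.

Lemma tree_flow_energy e : (e < nE G)%nat ->
  rip G (tree_flow G pth e) (tree_flow G pth e) = path_res G (pth (ea G e) (eb G e)).
Proof.
  intros He. destruct (edge_ends_bound G WF e He).
  destruct (Hpth (ea G e) (eb G e)) as [Hw Hn]; auto.
  apply (simple_path_flow_energy G T _ _ _ Hw Hn).
Qed.

Lemma path_res_nonneg e : (e < nE G)%nat -> 0 <= path_res G (pth (ea G e) (eb G e)).
Proof.
  intros He. destruct (edge_ends_bound G WF e He) as [Ha Hb]. rewrite <- tree_flow_energy by auto.
  apply (rip_self_nonneg G WF).
Qed.

Lemma stretch_nonneg e : (e < nE G)%nat -> 0 <= stretch G pth e.
Proof.
  intros He. apply Rmult_le_pos; [apply Rlt_le, Rinv_0_lt_compat, (res_pos G WF); auto|].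
  apply path_res_nonneg; auto.
Qed.

(** Any edge has positive stretch, since its endpoints differ. *)
Lemma stT_pos : (exists e, (e < nE G)%nat) -> 0 < stT G pth.
Proof.
  intros [e0 He0]. eapply Rlt_le_trans; [|apply (rsum_single_le _ _ e0 stretch_nonneg He0)].
  destruct (edge_wf G WF e0 He0) as [Ha [Hb [Hne _]]].
  pose proof (pth_walk G T pth Hpth _ _ Ha Hb) as Hw.
  apply Rmult_lt_0_compat; [apply Rinv_0_lt_compat, (res_pos G WF); auto|].
  destruct (pth (ea G e0) (eb G e0)) as [|st q] eqn:Ep; [simpl in Hw; congruence|].
  change (0 < lsum (st :: q) (fun st => res G (fst st))). rewrite lsum_cons.
  pose proof (res_pos G WF _ (proj1 Hw)).
  assert (0 <= lsum q (fun st => res G (fst st))).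
  { apply lsum_nonneg. intros st' Hi. apply Rlt_le, (res_pos G WF).
    apply (walk_edges G T _ _ _ Hw st'). right; auto. }
  lra.
Qed.

(** Weighted Cauchy–Schwarz on [xi(f_0) = sum_e fstar_e <pi_e, f_0>_R], then
    [<pi_e, f_0>_R^2 <= r_e st(e) xi(f_0)]. *)
Lemma initial_energy_bound : energy G f0 <= stT G pth * energy G fstar.
Proof.
  pose proof (weighted_cauchy_schwarz (nE G) (res G) fstar (fun e => rip G (tree_flow G pth e) f0)
                (fun i Hi => res_pos G WF i Hi)) as Hcs.
  cbv beta in Hcs. rewrite <- initial_energy_pairing in Hcs.
  rewrite (rsum_ext _ (fun i => res G i * fstar i * fstar i) (fun i => fstar i * res G i * fstar i))
    in Hcs by (intros; ring).
  change (rsum (nE G) (fun i => fstar i * res G i * fstar i)) with (energy G fstar) in Hcs.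
  assert (Hb : rsum (nE G) (fun i => rip G (tree_flow G pth i) f0 * rip G (tree_flow G pth i) f0 / res G i)
               <= energy G f0 * stT G pth).
  { unfold stT. rewrite <- rsum_scal. apply rsum_le. intros e He. pose proof (res_pos G WF e He).
    pose proof (rip_cauchy_schwarz G WF (tree_flow G pth e) f0) as Hcs_e.
    rewrite tree_flow_energy, <- energy_rip in Hcs_e by auto.
    unfold stretch, Rdiv.
    replace (energy G f0 * (/ res G e * path_res G (pth (ea G e) (eb G e))))
      with (energy G f0 * path_res G (pth (ea G e) (eb G e)) * / res G e) by ring.
    apply Rmult_le_compat_r; [apply Rlt_le, Rinv_0_lt_compat|]; auto. }
  pose proof (energy_nonneg G WF fstar) as Hs0. pose proof (energy_nonneg G WF f0) as Hx0.
  assert (Hst : 0 <= stT G pth) by (apply rsum_nonneg; apply stretch_nonneg).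
  assert (Hsq : energy G f0 * energy G f0 <= energy G fstar * (energy G f0 * stT G pth))
    by (eapply Rle_trans; [exact Hcs | apply Rmult_le_compat_l; auto]).
  destruct (Rle_lt_or_eq_dec 0 _ Hx0) as [Hp|Hz]; [|rewrite <- Hz; nra].
  apply (Rmult_le_reg_l (energy G f0)); auto. nra.
Qed.

Lemma initial_gap_bound : gap G fstar f0 <= stT G pth * energy G fstar.
Proof. pose proof initial_energy_bound. pose proof (energy_nonneg G WF fstar). unfold gap. lra. Qed.

End InitialFlow.

Lemma ceilR_ge x : x <= IZR (ceilR x).
Proof. unfold ceilR. destruct (archimed (- x)). rewrite opp_IZR, minus_IZR. lra. Qed.

Lemma Z_to_nat_ge z : IZR z <= INR (Z.to_nat z).
Proof.
  destruct (Z_le_gt_dec 0 z) as [H|H].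
  - rewrite INR_IZR_INZ, Z2Nat.id by auto. lra.
  - destruct z; try lia. rewrite Z2Nat.inj_neg. simpl. apply IZR_le. lia.
Qed.

Lemma exp_pow x k : exp x ^ k = exp (INR k * x).
Proof.
  induction k as [|k IH]; [simpl; rewrite Rmult_0_l, exp_0; reflexivity|].
  simpl pow. rewrite IH, <- exp_plus, S_INR. f_equal. ring.
Qed.

Lemma exp_le_compat a b : a <= b -> exp a <= exp b.
Proof. intros [H| ->]; [apply Rlt_le, exp_increasing; auto | lra]. Qed.

(** The iteration count [K = ceil (tau ln (st(T) tau / eps))] makes the
    contraction factor small: [(1 - 1/tau)^K <= exp (-K/tau) <= eps / (st(T) tau)]. *)
Lemma iteration_count_contraction (tau st eps : R) (K : nat) : 1 <= tau -> 0 < st -> 0 < eps ->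
  K = Z.to_nat (ceilR (tau * ln (st * tau / eps))) -> (1 - / tau) ^ K <= eps / (st * tau).
Proof.
  intros Ht Hs He HK.
  assert (HKy : tau * ln (st * tau / eps) <= INR K)
    by (rewrite HK; eapply Rle_trans; [apply ceilR_ge | apply Z_to_nat_ge]).
  assert (Hi : 0 < / tau) by (apply Rinv_0_lt_compat; lra).
  assert (Hpos : 0 < st * tau / eps) by (apply Rdiv_lt_0_compat; nra).
  eapply Rle_trans.
  { apply (pow_incr _ (exp (- / tau))). split.
    - assert (/ tau <= 1) by (rewrite <- Rinv_1; apply Rinv_le_contravar; lra). lra.
    - pose proof (exp_ineq1_le (- / tau)). lra. }
  rewrite exp_pow.
  replace (eps / (st * tau)) with (exp (- ln (st * tau / eps)))
    by (rewrite exp_Ropp, exp_ln by auto; field; split; lra).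
  apply exp_le_compat.
  enough (ln (st * tau / eps) <= INR K * / tau) by lra.
  apply (Rmult_le_reg_l tau); [lra|].
  replace (tau * (INR K * / tau)) with (INR K) by (field; lra). lra.
Qed.

Lemma residual_bounds (tau st q eps E g : R) : 1 <= tau -> 0 < st -> 0 < eps -> 0 <= E ->
  0 <= q -> q <= eps / (st * tau) -> 0 <= g -> g <= st * E ->
  E + q * g <= (1 + eps) * E /\ tau * q * g <= eps * E.
Proof.
  intros Ht Hst He HE Hq0 Hq Hg0 Hg.
  assert (Hprod : tau * q * g <= eps * E).
  { apply Rle_trans with (tau * (eps / (st * tau)) * (st * E)).
    - apply Rmult_le_compat; [nra | exact Hg0 | apply Rmult_le_compat_l; lra | exact Hg].
    - right. field. lra. }
  split; [|exact Hprod].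
  assert (0 <= q * g) by (apply Rmult_le_pos; auto).
  assert (q * g <= tau * q * g) by (rewrite Rmult_assoc; nra).
  replace ((1 + eps) * E) with (E + eps * E) by ring. lra.
Qed.

Theorem theorem3p1 :
  forall (G : graph) (T : nat -> bool) (pth : nat -> nat -> list (nat * bool)) (s : nat)
         (chi f0 fstar : nat -> R) (X : nat -> nat -> R) (eps : R),
    well_formed G ->
    spanning_tree G T ->
    (forall a b, (a < nV G)%nat -> (b < nV G)%nat -> tree_path G T a b (pth a b)) ->
    (s < nV G)%nat ->
    rsum (nV G) chi = 0 ->
    0 < eps < 1 ->
    (exists e, (e < nE G)%nat /\ T e = false) ->
    (* f_0: the feasible flow supported on T *)
    feasible G chi f0 -> supported_on G T f0 ->
    (* f^*: the feasible energy minimizer *)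
    feasible G chi fstar -> (forall f, feasible G chi f -> energy G fstar <= energy G f) ->
    (* X = L^dagger *)
    is_pinv (nV G) (Lap G) X ->
    let K := Z.to_nat (ceilR (tau G T pth * ln (stT G pth * tau G T pth / eps))) in
    expect G T pth K (energy G) f0 <= (1 + eps) * energy G fstar /\
    expect G T pth K
      (fun f => Lnorm G (fun a => volt G pth s f a - matvec (nV G) X chi a)) f0
      <= sqrt eps * Lnorm G (matvec (nV G) X chi).
Proof.
  intros G T pth s chi f0 fstar X eps WF HST Hpth Hs _ Heps Hoff Hf0 Hf0s Hfs Hmin Hpinv K.
  pose proof (tau_ge_1 G T pth WF Hpth Hoff) as Htau.
  assert (Hst : 0 < stT G pth) by (destruct Hoff as [e [He _]]; apply (stT_pos G T pth WF Hpth); eauto).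
  pose proof (iteration_count_contraction _ _ eps K Htau Hst (proj1 Heps) eq_refl) as Hq.
  pose proof (pow_le _ K (proj1 (contraction_bounds G T pth WF Hpth Hoff))) as Hq0.
  pose proof (gap_nonneg G chi fstar Hmin f0 Hf0) as Hg0.
  pose proof (initial_gap_bound G T pth WF HST Hpth chi fstar f0 Hfs Hf0 Hf0s) as Hg.
  pose proof (energy_nonneg G WF fstar) as HE.
  destruct (residual_bounds _ _ _ eps _ _ Htau Hst (proj1 Heps) HE Hq0 Hq Hg0 Hg) as [Henergy Hvolt].
  split.
  - eapply Rle_trans; [|exact Henergy].
    apply (expected_energy_bound G T pth s WF HST Hpth Hs chi fstar Hfs Hmin Hoff K f0 Hf0).
  - eapply Rle_trans.
    { apply (expected_voltage_error_bound G T pth s WF HST Hpth Hs chi fstar Hfs Hmin Hoff X Hpinv K f0 Hf0). }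
    rewrite (pinv_norm G T pth s WF HST Hpth Hs chi fstar Hfs Hmin X Hpinv), <- sqrt_mult_alt by lra.
    apply sqrt_le_1_alt. exact Hvolt.
Qed.
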